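(* Let $0<q<1$, let $n$ be a positive integer and let $s_1,\dots,s_n$ be real numbers with $s_k>1$ for all $k$. Then \[ \prod_{k=1}^n \zeta[s_k] = \sum_{m=1}^n \sum_{(P_1,\dots,P_m)} \sum_{\nu_1=0}^{|P_1|-1}\cdots\sum_{\nu_m=0}^{|P_m|-1} \zeta\Big[p_1-\nu_1,\,p_2-\nu_2,\,\dots,\,p_m-\nu_m\Big]\prod_{j=1}^m \binom{|P_j|-1}{\nu_j}(1-q)^{\nu_j}, \] where the middle sum runs over all ordered set partitions $(P_1,\dots,P_m)$ of $\{1,\dots,n\}$ into exactly $m$ blocks, and $p_j:=\sum_{i\in P_j}s_i$.
   Context: Fix $0<q<1$. For real $x$, $[x]_q := (1-q^x)/(1-q)$. For an integer $m\ge1$ and real $s_1,\dots,s_m$ with $s_1>1$ and $s_j\ge1$ for $j\ge2$, the multiple $q$-zeta function is $\zeta[s_1,\dots,s_m] := \sum_{k_1>\cdots>k_m>0}\prod_{j=1}^m q^{(s_j-1)k_j}/[k_j]_q^{s_j}$ (sum over positive integers). An ordered set partition of a finite set $S$ into $m$ blocks is an $m$-tuple $(P_1,\dots,P_m)$ of pairwise disjoint non-empty subsets of $S$ whose union is $S$. *)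

From HB Require Import structures.
From mathcomp Require Import all_boot all_order all_algebra.
From mathcomp Require Import all_classical all_reals all_analysis.
Set Implicit Arguments. Unset Strict Implicit. Unset Printing Implicit Defensive.
Import Order.TTheory GRing.Theory Num.Theory numFieldNormedType.Exports.
Local Open Scope ring_scope.

Definition qnum {R : realType} (q x : R) : R := (1 - q `^ x) / (1 - q).

Definition qterm {R : realType} (q s : R) (k : nat) : R :=
  q `^ ((s - 1) * k%:R) / (qnum q k%:R) `^ s.

(* Truncated multiple q-zeta sum:
   qzeta_trunc q [:: s_1; ...; s_m] N
     = sum over N >= k_1 > k_2 > ... > k_m > 0 of prod_j qterm q s_j k_j
   (empty list gives 1). *)
Fixpoint qzeta_trunc {R : realType} (q : R) (s : seq R) (N : nat) : R :=
  match s with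
  | [::] => 1
  | s1 :: s' => \sum_(1 <= k < N.+1) qterm q s1 k * qzeta_trunc q s' k.-1
  end.

Definition qzeta {R : realType} (q : R) (s : seq R) : R :=
  limn (fun N => qzeta_trunc q s N).

Definition ordered_set_partition (n m : nat) (P : {ffun 'I_m -> {set 'I_n}}) : bool :=
  [&& [forall j, P j != finset.set0],
      [forall i, forall j, (i != j) ==> [disjoint P i & P j]] &
      [forall x, exists j, x \in P j]].

(* Both sides are limits of their truncations to k_1 <= N, so it suffices to prove
   the truncated identity for every N; this is done by induction on N, for all
   subsets A of the indices at once.  Passing from N to N + 1, each factor of
   \prod_(k in A) zeta_N[s_k] gains its term at k = N + 1, and the product expands
   over the set S of factors taking that new term.  On the partition side these
   are exactly the terms whose first block is S and whose leading index is N + 1,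
   and the two contributions agree by the one-block identity
     \prod_(i in S) q^((s_i - 1) k) / [k]^(s_i)
       = \sum_nu C(|S| - 1, nu) (1 - q)^nu q^((p - nu - 1) k) / [k]^(p - nu),
   p = \sum_(i in S) s_i, while the remaining factors over A :\: S are handled
   by the induction hypothesis. *)

From HB Require Import structures.
From mathcomp Require Import all_boot all_order all_algebra.
From mathcomp Require Import all_classical all_reals all_analysis.
From mathcomp Require Import ring lra zify.
Import Order.TTheory GRing.Theory Num.Theory numFieldNormedType.Exports.
Local Open Scope ring_scope.

Set Implicit Arguments.
Unset Strict Implicit.
Unset Printing Implicit Defensive.

Section FfunCons.
Variable T : finType.

Definition fcons m (x : T) (g : {ffun 'I_m -> T}) : {ffun 'I_m.+1 -> T} :=
  [ffun j => if unlift ord0 j is Some j' then g j' else x].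

Lemma fcons0 m x g : @fcons m x g ord0 = x.
Proof. by rewrite ffunE unlift_none. Qed.

Lemma fconsS m x g j : @fcons m x g (lift ord0 j) = g j.
Proof. by rewrite ffunE liftK. Qed.

Lemma big_ffunS (R : Type) (idx : R) (op : Monoid.com_law idx) m
    (P : pred {ffun 'I_m.+1 -> T}) (F : {ffun 'I_m.+1 -> T} -> R) :
  \big[op/idx]_(f | P f) F f =
  \big[op/idx]_x \big[op/idx]_(g | P (fcons x g)) F (fcons x g).
Proof.
rewrite pair_big_dep (reindex (fun p => fcons p.1 p.2)) //=.
exists (fun f => (f ord0, [ffun j => f (lift ord0 j)])) => [[x g] _|f _] /=.
  by rewrite fcons0; congr pair; apply/ffunP => j; rewrite ffunE fconsS.
by apply/ffunP => j; rewrite ffunE; case: unliftP => [j' ->|->]; rewrite ?ffunE.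
Qed.

End FfunCons.

Lemma forall_ordS m (p : pred 'I_m.+1) :
  [forall j, p j] = p ord0 && [forall j : 'I_m, p (lift ord0 j)].
Proof.
apply/forallP/andP => [pj|[p0 /forallP pS] j]; first by split=> //; apply/forallP.
by case: (unliftP ord0 j) => [j' ->|->].
Qed.

Lemma big_andl (R : Type) (idx : R) (op : Monoid.law idx) (I J : finType)
    (a : pred I) (b : I -> pred J) (F : I -> J -> R) :
  \big[op/idx]_i \big[op/idx]_(j | a i && b i j) F i j =
  \big[op/idx]_(i | a i) \big[op/idx]_(j | b i j) F i j.
Proof.
by rewrite [RHS]big_mkcond; apply: eq_bigr => i _; case: (a i) => //=; exact: big_pred0.
Qed.

Lemma prod_setD_distr (R : comPzRingType) (I : finType) (A : {set I}) (a b : I -> R) :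
  \prod_(k in A) (a k + b k) =
  \sum_(S : {set I} | S \subset A) (\prod_(k in S) a k) * \prod_(k in A :\: S) b k.
Proof.
pose F k := if k \in A then a k else 0.
pose G k := if k \in A then b k else 1.
rewrite big_mkcond (eq_bigr (fun k => F k + G k)); last first.
  by move=> k _; rewrite /F /G; case: (k \in A); rewrite ?add0r.
rewrite bigA_distr [RHS]big_mkcond; apply: eq_bigr => J _.
case: ifPn => [JA|/fintype.subsetPn[k kJ kA]]; last first.
  by rewrite (bigD1 k) //= kJ /F (negbTE kA) mul0r.
rewrite (bigID (mem J)) /=; congr (_ * _).
  by apply: eq_big => // k kJ; rewrite kJ /F (fintype.subsetP JA _ kJ).
rewrite big_mkcond [RHS]big_mkcond; apply: eq_bigr => k _.
by rewrite finset.in_setD /G; case: (k \in J); case: (k \in A).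
Qed.

Section OrderedPartition.
Variable T : finType.

(* Counting blocks, rather than asking for disjointness and covering, turns
   peeling off the first block (ordered_partition_fcons) into a pointwise check. *)
Definition block_count m (P : {ffun 'I_m -> {set T}}) (x : T) : nat :=
  #|[set j | x \in P j]|.

Definition ordered_partition (A : {set T}) m (P : {ffun 'I_m -> {set T}}) : bool :=
  [forall j, P j != finset.set0] && [forall x, block_count P x == (x \in A)].

Lemma block_count_fcons m S (P : {ffun 'I_m -> {set T}}) x :
  block_count (fcons S P) x = ((x \in S) + block_count P x)%N.
Proof.
rewrite /block_count -!sum1dep_card big_mkcond big_ord_recl /= fcons0.
by congr (_ + _); rewrite [RHS]big_mkcond; apply: eq_bigr => j _; rewrite fconsS.
Qed.

Lemma ordered_partition_fcons A m S (P : {ffun 'I_m -> {set T}}) :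
  ordered_partition A (fcons S P) =
  [&& S != finset.set0, S \subset A & ordered_partition (A :\: S) P].
Proof.
rewrite /ordered_partition forall_ordS fcons0 -andbA; congr andb.
rewrite [RHS]andbCA; congr andb.
  by apply: eq_forallb => j; rewrite fconsS.
have countE x : (((x \in S) + block_count P x)%N == (x \in A)) =
    ((x \in S) ==> (x \in A)) && (block_count P x == (x \in A :\: S)).
  by rewrite finset.in_setD; case: (x \in S); case: (x \in A); case: (block_count P x).
under eq_forallb do rewrite block_count_fcons countE.
apply/forallP/andP => [cnt|[/fintype.subsetP SA /forallP cnt] x]; last first.
  by rewrite cnt andbT; apply/implyP/SA.
split; last by apply/forallP => x; case/andP: (cnt x).
by apply/fintype.subsetP => x; case/andP: (cnt x) => /implyP.
Qed.

Lemma ordered_partition_ord0 A (P : {ffun 'I_0 -> {set T}}) :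
  ordered_partition A P = (A == finset.set0).
Proof.
have cnt0 x : block_count P x = 0%N.
  by apply/eqP; rewrite cards_eq0; apply/eqP/finset.setP => -[].
rewrite /ordered_partition (_ : [forall j, _] = true); last by apply/forallP => -[].
apply/forallP/eqP => [cnt|-> x]; last by rewrite cnt0 finset.in_set0.
by apply/finset.setP => x; have := cnt x; rewrite cnt0 finset.in_set0; case: (x \in A).
Qed.

End OrderedPartition.

Lemma ordered_set_partitionE n m (P : {ffun 'I_m -> {set 'I_n}}) :
  ordered_set_partition P = ordered_partition [set: 'I_n] P.
Proof.
rewrite /ordered_set_partition /ordered_partition; congr andb.
apply/andP/forallP => [[/forallP dj /forallP cv] x|cnt].
  have [j xPj] := existsP (cv x); rewrite finset.in_setT; apply/cards1P; exists j.
  apply/finset.setP => i; rewrite !inE; apply/idP/eqP => [xPi|->//].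
  apply/eqP; apply: contraTT xPi => ij.
  by rewrite (disjointFl (implyP (forallP (dj i) j) ij) xPj).
have block_of x : exists j, [set j | x \in P j] = [set j].
  by apply/cards1P; have := cnt x; rewrite finset.in_setT.
split; last first.
  apply/forallP => x; have [j cntE] := block_of x.
  by apply/existsP; exists j; have := set11 j; rewrite -cntE inE.
apply/forallP => i; apply/forallP => j; apply/implyP => ij.
rewrite -setI_eq0; apply/eqP/finset.setP => x; rewrite !inE.
apply/negbTE/andP => -[xPi xPj]; have [k cntE] := block_of x.
have : i \in [set j | x \in P j] by rewrite inE.
have : j \in [set j | x \in P j] by rewrite inE.
by rewrite cntE !inE => /eqP jk /eqP ik; rewrite ik jk eqxx in ij.
Qed.

Section QTerm.
Variables (R : realType) (q : R).
Hypotheses (q_gt0 : 0 < q) (q_lt1 : q < 1).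

Lemma qnum_nat k : qnum q k%:R = (1 - q ^+ k) / (1 - q).
Proof. by rewrite /qnum (powR_mulrn _ (ltW q_gt0)). Qed.

Lemma qnum_ge1 k : (0 < k)%N -> 1 <= qnum q k%:R.
Proof.
case: k => // k _; rewrite qnum_nat ler_pdivlMr ?subr_gt0 // mul1r lerB //.
by rewrite exprS ler_piMr ?exprn_ile1 // ltW.
Qed.

Lemma qnum_gt0 k : (0 < k)%N -> 0 < qnum q k%:R.
Proof. by move/qnum_ge1; apply: lt_le_trans. Qed.

Lemma qterm_ge0 x k : 0 <= qterm q x k.
Proof. by rewrite /qterm divr_ge0 // powR_ge0. Qed.

Lemma qtermE x k : qterm q x k = (q ^+ k) `^ (x - 1) / (qnum q k%:R) `^ x.
Proof. by rewrite /qterm [(x - 1) * _]mulrC powRrM (powR_mulrn _ (ltW q_gt0)). Qed.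

Lemma qterm_le_geometric x k : 0 <= x -> (0 < k)%N ->
  qterm q x k <= (q `^ (x - 1)) ^+ k.
Proof.
move=> x_ge0 k_gt0; rewrite /qterm powRrM (powR_mulrn _ (powR_ge0 _ _)).
have qnum1 := qnum_ge1 k_gt0.
rewrite ler_pdivrMr ?powR_gt0 ?(lt_le_trans ltr01) // ler_peMr ?exprn_ge0 ?powR_ge0 //.
by have := ler_powR qnum1 x_ge0; rewrite powRr0.
Qed.

Lemma prod_powR (I : finType) (A : {pred I}) (a : R) (f : I -> R) : 0 < a ->
  \prod_(i in A) a `^ f i = a `^ (\sum_(i in A) f i).
Proof.
move=> a_gt0; apply/esym/(big_morph (fun y => a `^ y)); last exact: powRr0.
by move=> y z; rewrite powRD // (gt_eqF a_gt0) implybT.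
Qed.

(* For a block S with p = \sum_(i in S) s i, both sides equal u^(p - #|S|) / c^p
   with u = q^k and c = [k]_q; the sum is the binomial expansion of
   (u + c (1 - q))^(#|S| - 1) = 1. *)
Lemma prod_qterm (I : finType) (S : {set I}) (s : I -> R) k :
  (0 < k)%N -> S != finset.set0 ->
  \prod_(i in S) qterm q (s i) k =
  \sum_(nu < #|S|) qterm q (\sum_(i in S) s i - nu%:R) k *
                     ('C(#|S|.-1, nu)%:R * (1 - q) ^+ nu).
Proof.
move=> k_gt0 S_neq0.
set u := q ^+ k; set c := qnum q k%:R; set p := \sum_(i in S) s i.
have u_gt0 : 0 < u by rewrite exprn_gt0.
have c_gt0 : 0 < c by exact: qnum_gt0.
have cq : c * (1 - q) = 1 - u by rewrite /c qnum_nat divfK // subr_eq0 gt_eqF.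
have -> : \prod_(i in S) qterm q (s i) k = u `^ (p - #|S|%:R) / c `^ p.
  under eq_bigr do rewrite qtermE.
  by rewrite prodf_div !prod_powR // sumrB sumr_const.
under eq_bigr do rewrite qtermE -/u -/c.
clearbody u c p.
have : (0 < #|S|)%N by rewrite card_gt0.
case: #|S| => [//|r] _ /=.
transitivity (u `^ (p - r.+1%:R) / c `^ p * (u + (1 - u)) ^+ r).
  by rewrite addrCA subrr addr0 expr1n mulr1.
rewrite exprDn mulr_sumr; apply: eq_bigr => nu _.
have nu_le_r : (nu <= r)%N by rewrite -ltnS.
have -> : p - nu%:R - 1 = (p - r.+1%:R) + (r - nu)%N%:R.
  by rewrite natrB // mulrS; ring.
rewrite (@powRD _ u (p - r.+1%:R)) ?(gt_eqF u_gt0) ?implybT // (powR_mulrn _ (ltW u_gt0)).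
rewrite (@powRB _ c p nu%:R) ?(gt_eqF c_gt0) ?implybT // (powR_mulrn _ (ltW c_gt0)) -cq.
rewrite -mulr_natr exprMn; field.
by rewrite !gt_eqF // ?powR_gt0 ?exprn_gt0.
Qed.

End QTerm.

Section PartitionSum.
Variables (R : realType) (q : R) (n : nat) (s : 'I_n -> R).

Definition block_weight (S : {set 'I_n}) (nu : nat) : R := \sum_(i in S) s i - nu%:R.

Definition block_factor (S : {set 'I_n}) (nu : nat) : R :=
  'C(#|S|.-1, nu)%:R * (1 - q) ^+ nu.

Definition block_weights m (P : {ffun 'I_m -> {set 'I_n}}) (nu : {ffun 'I_m -> 'I_n}) :=
  [seq block_weight (P j) (nu j) | j <- enum 'I_m].

Definition block_coef m (P : {ffun 'I_m -> {set 'I_n}}) (nu : {ffun 'I_m -> 'I_n}) :=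
  \prod_(j < m) block_factor (P j) (nu j).

Definition partition_sum (f : seq R -> R) (A : {set 'I_n}) m : R :=
  \sum_(P : {ffun 'I_m -> {set 'I_n}} | ordered_partition A P)
    \sum_(nu : {ffun 'I_m -> 'I_n} | [forall j, (nu j < #|P j|)%N])
      f (block_weights P nu) * block_coef P nu.

Lemma block_weights_fcons m S P v (nu : {ffun 'I_m -> 'I_n}) :
  block_weights (fcons S P) (fcons v nu) = block_weight S v :: block_weights P nu.
Proof.
rewrite /block_weights enum_ordSl /= !fcons0 -map_comp.
by congr cons; apply: eq_map => j /=; rewrite !fconsS.
Qed.

Lemma block_coef_fcons m S P v (nu : {ffun 'I_m -> 'I_n}) :
  block_coef (fcons S P) (fcons v nu) = block_factor S v * block_coef P nu.
Proof.
rewrite /block_coef big_ord_recl !fcons0.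
by congr (_ * _); apply: eq_bigr => j _; rewrite !fconsS.
Qed.

Lemma partition_sum0 f A : partition_sum f A 0 = (A == finset.set0)%:R * f [::].
Proof.
have ffun0_eq (T : finType) (g h : {ffun 'I_0 -> T}) : g = h by apply/ffunP => -[].
pose P0 : {ffun 'I_0 -> {set 'I_n}} := ffun0 (card_ord 0).
pose nu0 : {ffun 'I_0 -> 'I_n} := ffun0 (card_ord 0).
rewrite /partition_sum; under eq_bigl do rewrite ordered_partition_ord0.
have [A0|A_neq0] := eqVneq A finset.set0; last by rewrite big_pred0 ?mul0r.
rewrite (big_pred1 P0) => [|P]; last by rewrite /= (ffun0_eq _ P P0) eqxx.
rewrite (big_pred1 nu0) => [|nu]; last first.
  by rewrite /= (ffun0_eq _ nu nu0) eqxx; apply/forallP => -[].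
by rewrite /block_weights /block_coef enum_ord0 big_ord0 mulr1 mul1r.
Qed.

Lemma partition_sumS f A m :
  partition_sum f A m.+1 =
  \sum_(S : {set 'I_n} | (S != finset.set0) && (S \subset A))
    \sum_(v : 'I_n | (v < #|S|)%N)
      block_factor S v * partition_sum (fun L => f (block_weight S v :: L)) (A :\: S) m.
Proof.
rewrite /partition_sum big_ffunS.
under eq_bigr do under eq_bigl do rewrite ordered_partition_fcons andbA.
rewrite big_andl; apply: eq_bigr => S _.
transitivity (\sum_(P | ordered_partition (A :\: S) P) \sum_(v : 'I_n | (v < #|S|)%N)
    \sum_(nu : {ffun 'I_m -> 'I_n} | [forall j, (nu j < #|P j|)%N])
      block_factor S v * (f (block_weight S v :: block_weights P nu) * block_coef P nu)).
  apply: eq_bigr => P _; rewrite big_ffunS -[RHS]big_andl.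
  apply: eq_bigr => v _; apply: eq_big => [nu|nu _].
    by rewrite forall_ordS !fcons0; congr andb; apply: eq_forallb => j; rewrite !fconsS.
  by rewrite block_weights_fcons block_coef_fcons mulrCA.
rewrite exchange_big; apply: eq_bigr => v _.
by rewrite mulr_sumr; apply: eq_bigr => P _; rewrite mulr_sumr.
Qed.

Lemma partition_sumDZ f g a A m :
  partition_sum (fun L => f L + a * g L) A m =
  partition_sum f A m + a * partition_sum g A m.
Proof.
rewrite /partition_sum mulr_sumr -big_split; apply: eq_bigr => P _.
by rewrite mulr_sumr -big_split; apply: eq_bigr => nu _; rewrite mulrDl mulrA.
Qed.

Local Notation Z := (qzeta_trunc q).

Lemma qzeta_trunc_consS x L N : Z (x :: L) N.+1 = Z (x :: L) N + qterm q x N.+1 * Z L N.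
Proof. by rewrite /= big_nat_recr. Qed.

Hypotheses (q_gt0 : 0 < q) (q_lt1 : q < 1).

Lemma partition_sum_truncS A N m :
  partition_sum (Z^~ N.+1) A m.+1 = partition_sum (Z^~ N) A m.+1 +
  \sum_(S : {set 'I_n} | (S != finset.set0) && (S \subset A))
    (\prod_(i in S) qterm q (s i) N.+1) * partition_sum (Z^~ N) (A :\: S) m.
Proof.
have consS x B : partition_sum (fun L => (Z^~ N.+1) (x :: L)) B m =
    partition_sum (fun L => (Z^~ N) (x :: L)) B m + qterm q x N.+1 * partition_sum (Z^~ N) B m.
  by rewrite -partition_sumDZ; congr partition_sum; apply/funext => L; rewrite qzeta_trunc_consS.
rewrite !partition_sumS -big_split; apply: eq_bigr => S /andP[S_neq0 _] /=.
under [in LHS]eq_bigr do rewrite consS mulrDr.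
rewrite big_split; congr (_ + _).
rewrite (prod_qterm q_gt0 q_lt1) // mulr_suml.
rewrite (big_ord_widen n (fun v => qterm q (block_weight S v) N.+1 * block_factor S v *
    partition_sum (Z^~ N) (A :\: S) m)); last by rewrite -[X in (_ <= X)%N]card_ord max_card.
by apply: eq_bigr => v _; rewrite mulrCA mulrA.
Qed.

Lemma prod_qzeta_trunc N (A : {set 'I_n}) M : (#|A| < M)%N ->
  \prod_(k in A) Z [:: s k] N = \sum_(0 <= m < M) partition_sum (Z^~ N) A m.
Proof.
elim: N A M => [|N IH] A [//|M] AM.
  rewrite big_nat_recl // partition_sum0 [X in _ + X]big1 ?addr0 => [|m _]; last first.
    apply: big1 => P _; apply: big1 => nu _.
    by rewrite /block_weights enum_ordSl /= big_geq ?mul0r.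
  have [->|/set0Pn[k kA]] := eqVneq A finset.set0; first by rewrite finset.big_set0 mulr1.
  by rewrite (bigD1 k) //= big_geq // !mul0r.
transitivity (\prod_(k in A) (qterm q (s k) N.+1 + Z [:: s k] N)).
  by apply: eq_bigr => k _; rewrite qzeta_trunc_consS mulr1 addrC.
rewrite prod_setD_distr (bigD1 finset.set0) ?finset.sub0set //=.
rewrite finset.big_set0 mul1r finset.setD0 (IH A M.+1) //.
rewrite !big_nat_recl // !partition_sum0 /= -addrA; congr (_ + _).
under [in RHS]eq_bigr do rewrite partition_sum_truncS.
rewrite big_split /=; congr (_ + _).
rewrite exchange_big /= (eq_bigl (fun S => (S != finset.set0) && (S \subset A))) => [|S]; last first.
  by rewrite andbC.
apply: eq_bigr => S /andP[S_neq0 SA]; rewrite -mulr_sumr (IH _ M) //.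
have S_gt0 : (0 < #|S|)%N by rewrite card_gt0.
by have := subset_leq_card SA; rewrite cardsDS //; lia.
Qed.

End PartitionSum.

Section Convergence.
Local Open Scope classical_set_scope.
Variables (R : realType) (q : R).
Hypotheses (q_gt0 : 0 < q) (q_lt1 : q < 1).
Local Notation Z := (qzeta_trunc q).

Lemma qzeta_trunc_ge0 L N : 0 <= Z L N.
Proof.
elim: L N => [|x L IH] N /=; first exact: ler01.
by apply: sumr_ge0 => k _; rewrite mulr_ge0 ?qterm_ge0.
Qed.

Lemma qzeta_trunc_nondecreasing L : nondecreasing_seq (Z L).
Proof.
apply/nondecreasing_seqP => N; case: L => [//|x L].
by rewrite qzeta_trunc_consS lerDl mulr_ge0 ?qterm_ge0 ?qzeta_trunc_ge0.
Qed.

Lemma qzeta_trunc_bounded L : all (fun x => 1 < x) L -> exists B, forall N, Z L N <= B.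
Proof.
elim: L => [|x L IH] /=; first by exists 1.
case/andP => x_gt1 /IH[B ZB].
have B_ge0 : 0 <= B := le_trans (qzeta_trunc_ge0 L 0) (ZB 0%N).
set r := q `^ (x - 1).
have r_gt0 : 0 < r by rewrite powR_gt0.
have r_lt1 : r < 1.
  have := @gt0_ltr_powR R (x - 1) _ q 1; rewrite powR1 !nnegrE.
  by apply; rewrite ?subr_gt0 ?ltW.
exists (B * (r * (1 - r)^-1)) => N.
apply: (@le_trans _ _ (\sum_(1 <= k < N.+1) r ^+ k * B)).
  apply: ler_sum_nat => k /andP[k_gt0 _].
  by rewrite ler_pM ?qterm_ge0 ?qzeta_trunc_ge0 ?qterm_le_geometric ?ZB // ltW // (lt_trans ltr01).
rewrite -mulr_suml mulrC ler_wpM2l // big_add1 /=.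
under eq_bigr do rewrite exprS.
by apply: geometric_le_lim; rewrite ?ltW // gtr0_norm.
Qed.

Lemma qzeta_trunc_cvg L : all (fun x => 1 < x) L -> Z L @ \oo --> qzeta q L.
Proof.
case/qzeta_trunc_bounded => B ZB.
apply: nondecreasing_is_cvgn; first exact: qzeta_trunc_nondecreasing.
by exists B => _ [N _ <-].
Qed.

End Convergence.

Lemma block_weight_gt1 (R : realType) n (s : 'I_n -> R) (S : {set 'I_n}) (nu : nat) :
  {in S, forall i, 1 < s i} -> S != finset.set0 -> (nu < #|S|)%N ->
  1 < block_weight s S nu.
Proof.
move=> s_gt1 /set0Pn[k kS] nu_lt; rewrite /block_weight ltrBrDr.
have : #|S|%:R < \sum_(i in S) s i :> R.
  rewrite -sum1_card natr_sum; apply: ltr_sum => [|i /s_gt1 //].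
  by apply/hasP; exists k; rewrite ?mem_index_enum.
by apply: le_lt_trans; rewrite addrC natr1 ler_nat.
Qed.

Section Limit.
Local Open Scope classical_set_scope.
Variables (R : realType) (q : R) (n : nat) (s : 'I_n -> R).
Hypotheses (q_gt0 : 0 < q) (q_lt1 : q < 1) (s_gt1 : forall i, 1 < s i).

Lemma partition_sum_cvg A m :
  (fun N => partition_sum q s (qzeta_trunc q ^~ N) A m) @ \oo -->
  partition_sum q s (qzeta q) A m.
Proof.
apply: cvg_big => [|P /andP[/forallP P_neq0 _]]; first exact: add_continuous.
apply: cvg_big => [|nu /forallP nu_lt]; first exact: add_continuous.
apply: cvgMl; apply: qzeta_trunc_cvg => //; apply/allP => _ /mapP[j _ ->].
by apply: block_weight_gt1; [move=> i _; exact: s_gt1 | exact: P_neq0 | exact: nu_lt].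
Qed.

End Limit.

Theorem theorem2p2 (R : realType) (q : R) (n : nat) (s : 'I_n -> R) :
  0 < q -> q < 1 -> (0 < n)%N -> (forall k, 1 < s k) ->
  \prod_(k < n) qzeta q [:: s k] =
  \sum_(1 <= m < n.+1)
    \sum_(P : {ffun 'I_m -> {set 'I_n}} | ordered_set_partition P)
      \sum_(nu : {ffun 'I_m -> 'I_n} | [forall j, (nu j < #|P j|)%N])
        qzeta q [seq (\sum_(i in P j) s i) - (nu j)%:R | j <- enum 'I_m]
        * \prod_(j < m) ('C(#|P j|.-1, nu j)%:R * (1 - q) ^+ nu j).
Proof.
move=> q_gt0 q_lt1 n_gt0 s_gt1.
rewrite (eq_bigr (partition_sum q s (qzeta q) [set: 'I_n])) => [|m _]; last first.
  by apply: eq_bigl => P; rewrite ordered_set_partitionE.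
pose u N := \prod_(k < n) qzeta_trunc q [:: s k] N.
have u_lhs : (u @ \oo --> \prod_(k < n) qzeta q [:: s k])%classic.
  apply: cvg_big => [|k _]; first exact: mul_continuous.
  by apply: qzeta_trunc_cvg; rewrite //= s_gt1.
have u_rhs : (u @ \oo --> \sum_(1 <= m < n.+1) partition_sum q s (qzeta q) [set: 'I_n] m)%classic.
  have -> : u = fun N => \sum_(1 <= m < n.+1) partition_sum q s (qzeta_trunc q ^~ N) [set: 'I_n] m.
    apply/funext => N; have -> : u N = \prod_(k in [set: 'I_n]) qzeta_trunc q [:: s k] N.
      by apply: eq_bigl => k; rewrite finset.in_setT.
    rewrite (prod_qzeta_trunc s q_gt0 q_lt1 N (M := n.+1)) ?finset.cardsT ?card_ord //.
    rewrite big_nat_recl // partition_sum0 big_add1 (_ : ([set: 'I_n] == finset.set0) = false).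
      by rewrite mul0r add0r.
    by apply/negbTE/set0Pn; exists (Ordinal n_gt0).
  apply: cvg_big => [|m _]; [exact: add_continuous | exact: partition_sum_cvg].
exact: cvg_unique u_lhs u_rhs.
Qed.
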